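(* Let $K$ be a semifield and $P$ a polygon. Let $d_1,\dots,d_m$ be pairwise non-crossing internal diagonals of $P$ dividing $P$ into subpolygons $P_1,\dots,P_{m+1}$, and let $D_i$ be a dissection of $P_i$ for each $i$. Then the disjoint union $D = \{d_1,\dots,d_m\} \cup D_1 \cup \dots \cup D_{m+1}$ is a dissection of $P$. Moreover, let $f_i : \operatorname{diag}(P_i) \to K$ be a weak frieze with respect to $D_i$ for each $i$, and assume that whenever $P_i$ and $P_j$ share a diagonal $d$ (necessarily an edge of both), $f_i(d) = f_j(d)$. Then there is a unique weak frieze $f : \operatorname{diag}(P) \to K$ with respect to $D$ such that $f|_{\operatorname{diag}(P_i)} = f_i$ for each $i$.
   Context: A semifield is a set $K$ with binary operations $+$ and $\cdot$ such that $+$ is associative and commutative, $(K,\cdot)$ is a commutative group, and $\cdot$ distributes over $+$; no subtraction is assumed. A polygon is a finite set $V$ of at least three vertices with a cyclic order (pictured as a convex polygon in the plane). A diagonal is a two-element subset of $V$ (edges $\{\alpha,\alpha^+\}$, $\alpha^+$ the successor, count as diagonals); $\operatorname{diag}(P)$ is the set of diagonals; non-edges are internal diagonals. $\{\alpha,\beta\}$ and $\{\gamma,\delta\}$ cross if $\alpha,\beta,\gamma,\delta$ are four distinct vertices appearing in the cyclic order as $\alpha,\gamma,\beta,\delta$ or $\alpha,\delta,\beta,\gamma$. A subpolygon is a subset of $V$ of at least three vertices with the induced cyclic order; its diagonals are diagonals of $P$. A dissection is a (possibly empty) set of pairwise non-crossing internal diagonals. Write $f(\alpha,\beta):=f(\{\alpha,\beta\})$.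 A map $f:\operatorname{diag}(P)\to K$ is a weak frieze with respect to a dissection $D$ if $f(\alpha,\beta)f(\gamma,\delta) = f(\alpha,\gamma)f(\beta,\delta) + f(\alpha,\delta)f(\beta,\gamma)$ whenever $\{\alpha,\beta\}$, $\{\gamma,\delta\}$ are crossing diagonals with $\{\gamma,\delta\} \in D$. *)

From mathcomp Require Import all_boot.
Set Implicit Arguments. Unset Strict Implicit. Unset Printing Implicit Defensive.

Definition is_semifield (K : Type) (add mul : K -> K -> K) : Prop :=
  associative add /\ commutative add /\ associative mul /\ commutative mul /\
  (exists e : K, left_id e mul /\ forall x, exists y, mul x y = e) /\
  left_distributive mul add.

(* The polygon P has vertex set 'I_n (n >= 3) with the cyclic order
   0 -> 1 -> ... -> n-1 -> 0. *)

Definition cbetween n (x y z : 'I_n) : bool :=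
  [|| (x < y < z)%N, (y < z < x)%N | (z < x < y)%N].

(* a, c, b, d are four distinct vertices appearing in this cyclic order *)
Definition cyc4 n (a c b d : 'I_n) : bool := cbetween a c b && cbetween b d a.

Definition crossv n (a b c d : 'I_n) : bool := cyc4 a c b d || cyc4 a d b c.

Definition cross_set n (d e : {set 'I_n}) : bool :=
  [exists a : 'I_n, exists b : 'I_n, exists c : 'I_n, exists c' : 'I_n,
     [&& d == [set a; b], e == [set c; c'] & crossv a b c c']].

(* subpolygon: a subset of at least three vertices, with induced cyclic order;
   the whole polygon is [set: 'I_n]. *)
Definition subpolygon n (S : {set 'I_n}) : bool := (3 <= #|S|)%N.

Definition is_diag n (S d : {set 'I_n}) : bool := (d \subset S) && (#|d| == 2).

Definition is_edge n (S d : {set 'I_n}) : bool :=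
  [exists a in S, exists b in S,
     [&& a != b, d == [set a; b] & [forall x in S, ~~ cbetween a x b]]].

Definition is_internal n (S d : {set 'I_n}) : bool := is_diag S d && ~~ is_edge S d.

Definition is_dissection n (S : {set 'I_n}) (D : {set {set 'I_n}}) : Prop :=
  (forall d, d \in D -> is_internal S d) /\
  (forall d e, d \in D -> e \in D -> ~~ cross_set d e).

(* the subpolygons into which a dissection E of P divides P: subpolygons all of
   whose edges are edges of P or belong to E, and containing no element of E as
   an internal diagonal *)
Definition is_cell n (E : {set {set 'I_n}}) (S : {set 'I_n}) : bool :=
  [&& subpolygon S,
      [forall d : {set 'I_n}, is_edge S d ==> (is_edge [set: 'I_n] d || (d \in E))]
    & [forall d in E, ~~ is_internal S d]].

Definition cells n (E : {set {set 'I_n}}) : {set {set 'I_n}} := [set S | is_cell E S].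

(* f : diag(S) -> K (values off diag(S) irrelevant), f(a,b) := f [set a; b].
   Weak frieze on the subpolygon S with respect to D. *)
Definition weak_frieze (K : Type) (add mul : K -> K -> K) n
    (S : {set 'I_n}) (D : {set {set 'I_n}}) (f : {set 'I_n} -> K) : Prop :=
  forall a b c d : 'I_n, a \in S -> b \in S -> c \in S -> d \in S ->
    crossv a b c d -> [set c; d] \in D ->
    mul (f [set a; b]) (f [set c; d]) =
    add (mul (f [set a; c]) (f [set b; d])) (mul (f [set a; d]) (f [set b; c])).

From mathcomp Require Import all_boot zify.
Set Implicit Arguments. Unset Strict Implicit. Unset Printing Implicit Defensive.

(* Induction on the number of diagonals of E.  Cutting the polygon along a diagonal
   {u, v} of E leaves the two closed arcs from u to v and from v to u, each dissected
   by the diagonals of E it contains, and the cells of E are exactly the cells of these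
   two smaller dissections.  Diagonals lying in opposite arcs never cross, which gives
   the dissection part.  For the frieze part, two friezes f1, f2 of the arcs agree on
   {u, v}, and the exchange relation of a diagonal {a, b} crossing {u, v} forces
     f(a, b) = (f1(a, u) f2(b, v) + f1(a, v) f2(b, u)) / f(u, v),
   which gives existence and uniqueness.  The remaining exchange relations, for {a, b}
   crossing a diagonal {c, d} of one arc, follow from those of f1 for {a, u} and
   {a, v} against {c, d} by a semiring identity, so no subtraction is ever needed. *)

Section CyclicOrder.
Variable n : nat.
Implicit Types a b c d u v x y : 'I_n.

(* Equalities are taken on indices so that [lia] sees them. *)
Definition on_arc u v x := [|| x == u :> nat, x == v :> nat | cbetween u x v].

Definition cdist x y := if x <= y then y - x else y + n - x.

(* Facts about the cyclic order of a few vertices are linear arithmetic on indices. *)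
Ltac cyclic :=
  rewrite -?(inj_eq (@ord_inj _)); unfold on_arc, crossv, cyc4, cbetween in *; lia.

Lemma crossv_swapl a b c d : crossv a b c d = crossv b a c d.
Proof. apply/idP/idP; cyclic. Qed.

Lemma crossv_swapr a b c d : crossv a b c d = crossv a b d c.
Proof. apply/idP/idP; cyclic. Qed.

Lemma crossv_sym a b c d : crossv a b c d = crossv c d a b.
Proof. apply/idP/idP; cyclic. Qed.

Lemma crossv_distinct a b c d : crossv a b c d ->
  (a != b /\ a != c /\ a != d) /\ (b != c /\ b != d /\ c != d).
Proof. by move=> cr; do !split; move: cr; cyclic. Qed.

Lemma cbetween_cdist a x b : cbetween a x b = (0 < cdist a x < cdist a b)%N.
Proof.
have := ltn_ord a; have := ltn_ord x; have := ltn_ord b.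
rewrite /cbetween /cdist; case: (leqP a x); case: (leqP a b) => *; apply/idP/idP; lia.
Qed.

Lemma cdist_inj u : injective (cdist u).
Proof.
move=> a b; rewrite /cdist => e; apply: ord_inj; move: e.
have := ltn_ord a; have := ltn_ord b; have := ltn_ord u; case: (leqP u a); case: (leqP u b); lia.
Qed.

Lemma cdist_gt0 u b : b != u -> (0 < cdist u b)%N.
Proof. rewrite -(inj_eq (@ord_inj n)) /cdist; have := ltn_ord u; case: (leqP u b); lia. Qed.

Lemma on_arc_l u v : on_arc u v u.
Proof. by rewrite /on_arc eqxx. Qed.

Lemma on_arc_r u v : on_arc u v v.
Proof. by rewrite /on_arc eqxx orbT. Qed.

Lemma on_arc_cover u v x : u != v -> on_arc u v x || on_arc v u x.
Proof. cyclic. Qed.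

Lemma on_arc_both u v x : u != v -> on_arc u v x -> on_arc v u x -> x = u \/ x = v.
Proof.
move=> uv xuv xvu; have : (x == u) || (x == v) by move: uv xuv xvu; cyclic.
by case/orP => /eqP; [left|right].
Qed.

Lemma on_arc_of_not u v x : u != v -> ~~ cbetween u x v -> on_arc v u x.
Proof. cyclic. Qed.

Lemma on_arc_strict u v x : on_arc u v x -> ~~ on_arc v u x -> cbetween u x v.
Proof. cyclic. Qed.

Lemma cbetween_on_arc u v x : cbetween u x v -> on_arc u v x && ~~ on_arc v u x.
Proof. cyclic. Qed.

Lemma cbetween_asym u v x : cbetween u x v -> ~~ cbetween v x u.
Proof. cyclic. Qed.

Lemma cbetween_complement u v x :
  u != v -> x != u -> x != v -> ~~ cbetween u x v -> cbetween v x u.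
Proof. cyclic. Qed.

Lemma on_arcs_nocross u v x y z w : u != v -> on_arc u v x -> on_arc u v y ->
  on_arc v u z -> on_arc v u w -> ~~ crossv x y z w.
Proof. cyclic. Qed.

Lemma nocross_on_arc u v x y : u != v -> ~~ crossv x y u v ->
  (on_arc u v x && on_arc u v y) || (on_arc v u x && on_arc v u y).
Proof. cyclic. Qed.

Lemma crossv_cbetween a b u v : crossv a b u v ->
  (cbetween u a v && cbetween v b u) || (cbetween v a u && cbetween u b v).
Proof. cyclic. Qed.

Lemma cbetween_crossv u v a b : cbetween u a v -> cbetween v b u -> crossv a b u v.
Proof. cyclic. Qed.

Lemma on_arc_cbetween u v x : on_arc u v x -> x != u -> x != v -> cbetween u x v.
Proof. cyclic. Qed.

Lemma cbetween_opposite u v a s : cbetween u a v -> cbetween v s u -> cbetween a s u.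
Proof. cyclic. Qed.

Lemma cbetween_opposite_wrap u v a b s :
  cbetween u a v -> cbetween v s u -> cbetween u b a -> cbetween a s b.
Proof. cyclic. Qed.

Lemma crossv_shift u v a b c d : cbetween u a v -> cbetween v b u ->
  cbetween u c v -> cbetween u d v -> crossv a b c d -> crossv a u c d && crossv a v c d.
Proof. cyclic. Qed.

Lemma crossv_shift_u u v a b d : cbetween u a v -> cbetween v b u ->
  cbetween u d v -> crossv a b u d -> crossv a v u d.
Proof. cyclic. Qed.

Lemma crossv_shift_v u v a b d : cbetween u a v -> cbetween v b u ->
  cbetween u d v -> crossv a b v d -> crossv a u v d.
Proof. cyclic. Qed.

Lemma cbetween_off_arc u v a b x : u != v -> a != b ->
  on_arc u v a -> on_arc u v b -> ~~ cbetween a u b -> ~~ cbetween a v b ->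
  cbetween a x b -> ~~ on_arc u v x -> a = v /\ b = u.
Proof.
move=> uv ab auv buv aub avb axb xuv.
have /andP[/eqP-> /eqP->] // : (a == v) && (b == u).
by move: uv ab auv buv aub avb axb xuv; cyclic.
Qed.

End CyclicOrder.

Section Diagonals.
Variable n : nat.
Implicit Types (a b c d q s t u v x y : 'I_n) (S Q e : {set 'I_n}).

Lemma eq_set2 a b c d : [set a; b] = [set c; d] -> (a = c /\ b = d) \/ (a = d /\ b = c).
Proof.
move=> eab.
have := set21 c d; have := set22 c d; rewrite -eab !inE.
have := set21 a b; have := set22 a b; rewrite eab !inE.
by do 4![case/orP=> /eqP ?]; subst; auto.
Qed.

Lemma cross_setE a b c d : cross_set [set a; b] [set c; d] = crossv a b c d.
Proof.
apply/existsP/idP => [[a' /existsP[b' /existsP[c' /existsP[d' /and3P[/eqP eab /eqP ecd cr]]]]]|cr].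
  case: (eq_set2 eab) => [][-> ->]; case: (eq_set2 ecd) => [][-> ->] //;
  first [ done | rewrite crossv_swapl; done | rewrite crossv_swapr; done
        | rewrite crossv_swapl crossv_swapr; done ].
by exists a; apply/existsP; exists b; apply/existsP; exists c; apply/existsP; exists d;
  rewrite !eqxx.
Qed.

Lemma cross_setC e e' : cross_set e e' = cross_set e' e.
Proof.
by apply/idP/idP => /existsP[a /existsP[b /existsP[c /existsP[d /and3P[/eqP-> /eqP-> cr]]]]];
  rewrite cross_setE crossv_sym.
Qed.

Definition next_in S a b :=
  [/\ a \in S, b \in S, a != b & forall x, x \in S -> ~~ cbetween a x b].

Lemma is_edgeP S e : is_edge S e <-> exists a b, next_in S a b /\ e = [set a; b].
Proof.
split=> [/exists_inP[a aS /exists_inP[b bS /and3P[ab /eqP -> /forall_inP gap]]]|].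
  by exists a, b.
case=> a [b [[aS bS ab gap] ->]].
apply/exists_inP; exists a => //; apply/exists_inP; exists b => //.
by rewrite ab eqxx; apply/forall_inP.
Qed.

Lemma is_diagP S e :
  is_diag S e <-> exists a b, [/\ a \in S, b \in S, a != b & e = [set a; b]].
Proof.
split=> [/andP[eS /cards2P[a [b [ab eab]]]]|[a [b [aS bS ab ->]]]].
  by exists a, b; split; rewrite // (subsetP eS) // eab !inE eqxx ?orbT.
by rewrite /is_diag subUset !sub1set aS bS cards2 ab.
Qed.

Lemma is_diag_set2 S x y : x \in S -> y \in S -> x != y -> is_diag S [set x; y].
Proof. by move=> xS yS xy; apply/is_diagP; exists x, y. Qed.

Lemma is_edge_diag S e : is_edge S e -> is_diag S e.
Proof. by case/is_edgeP=> a [b [[aS bS ab _] ->]]; apply: is_diag_set2. Qed.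

Lemma is_edge_sub S Q e : S \subset Q -> e \subset S -> is_edge Q e -> is_edge S e.
Proof.
move=> SQ eS /is_edgeP[a [b [[_ _ ab gap] eab]]]; apply/is_edgeP; exists a, b.
move: eS; rewrite eab subUset !sub1set => /andP[aS bS].
by split=> //; split=> // x /(subsetP SQ); apply: gap.
Qed.

Lemma next_in_nocross S a b c d : next_in S a b -> c \in S -> d \in S -> ~~ crossv a b c d.
Proof.
by case=> _ _ _ gap cS dS; rewrite /crossv /cyc4 (negbTE (gap _ cS)) (negbTE (gap _ dS)).
Qed.

Lemma is_edge_nocross S a b c d :
  is_edge S [set a; b] -> c \in S -> d \in S -> ~~ crossv a b c d.
Proof.
case/is_edgeP=> a' [b' [nx eab]] cS dS.
case: (eq_set2 eab) => [][-> ->]; last rewrite crossv_swapl; exact: next_in_nocross nx cS dS.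
Qed.

Lemma next_in_exists S a y : a \in S -> y \in S -> y != a -> exists b, next_in S a b.
Proof.
move=> aS yS ya; have Py : (y \in S) && (y != a) by rewrite yS ya.
case: (@arg_minnP _ y (fun x => (x \in S) && (x != a)) (cdist a) Py) => b /andP[bS ba] bmin.
exists b; split; rewrite 1?eq_sym // => x xS; rewrite cbetween_cdist.
case: (eqVneq x a) => [->|xa]; first by rewrite /cdist leqnn subnn.
by have := bmin x; rewrite xS xa => /(_ isT); lia.
Qed.

Lemma gap_next_in S q : q \notin S -> (1 < #|S|)%N ->
  exists s t, next_in S s t /\ cbetween s q t.
Proof.
move=> qS /card_gt1P[s0 [y0 [s0S y0S s0y0]]].
case: (@arg_minnP _ s0 (fun x => x \in S) (fun x => cdist x q) s0S) => s sS smin.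
have [y yS ys] : exists2 y, y \in S & y != s.
  by case: (eqVneq y0 s) => [<-|]; [exists s0|exists y0].
have [t [tS ts nx]] : exists t, [/\ t \in S, t != s & next_in S s t].
  by have [t nx] := next_in_exists sS yS ys; exists t; case: (nx) => _ tS st _; rewrite eq_sym.
exists s, t; split=> //.
have qs : q != s by apply: contraNneq qS => ->.
have qt : q != t by apply: contraNneq qS => ->.
move: (smin t tS) qs qt ts; rewrite -!(inj_eq (@ord_inj n)) /cbetween /cdist.
have := ltn_ord s; have := ltn_ord t; have := ltn_ord q.
case: (leqP s q); case: (leqP t q); case: (leqP s t); lia.
Qed.

Lemma not_edge_gap Q u v : u \in Q -> v \in Q -> u != v ->
  ~~ is_edge Q [set u; v] -> exists2 q, q \in Q & cbetween u q v.
Proof.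
move=> uQ vQ uv; case: (boolP [exists q in Q, cbetween u q v]) => [/exists_inP//|nogap].
case/negP; apply/is_edgeP; exists u, v; split=> //; split=> // x xQ.
by apply: contra nogap => uxv; apply/exists_inP; exists x.
Qed.

End Diagonals.

Section Sides.
Variable n : nat.
Implicit Types (a b q s u v x : 'I_n) (S Q e : {set 'I_n}).

Definition side Q u v := [set x in Q | on_arc u v x].

Lemma side_sub Q u v : side Q u v \subset Q.
Proof. by apply/subsetP=> x; rewrite inE => /andP[]. Qed.

Lemma mem_side_l Q u v : u \in Q -> u \in side Q u v.
Proof. by rewrite inE on_arc_l andbT. Qed.

Lemma mem_side_r Q u v : v \in Q -> v \in side Q u v.
Proof. by rewrite inE on_arc_r andbT. Qed.

Lemma side_cover Q u v x : u != v -> x \in Q -> x \notin side Q u v -> x \in side Q v u.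
Proof. by move=> uv xQ; rewrite !inE xQ /=; have := on_arc_cover x uv; case: on_arc. Qed.

Lemma side_inter Q u v e : u != v ->
  e \subset side Q u v -> e \subset side Q v u -> #|e| = 2 -> e = [set u; v].
Proof.
move=> uv euv evu /eqP/cards2P[a [b [ab eab]]]; subst e.
have ends x : x \in [set a; b] -> x = u \/ x = v.
  move=> xe; move: (subsetP euv x xe) (subsetP evu x xe); rewrite !inE.
  by case/andP=> _ + /andP[_]; apply: on_arc_both.
move: ab; case: (ends a (set21 a b)) => ->; case: (ends b (set22 a b)) => ->;
  by rewrite ?eqxx // setUC.
Qed.

Lemma cbetween_side Q u v x :
  x \in Q -> cbetween u x v -> (x \in side Q u v) && (x \notin side Q v u).
Proof. by move=> xQ /cbetween_on_arc; rewrite !inE xQ. Qed.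

Lemma side_cbetween Q u v x :
  x \in side Q u v -> x \notin side Q v u -> cbetween u x v.
Proof. by rewrite !inE => /andP[xQ xuv]; rewrite xQ; apply: on_arc_strict. Qed.

Lemma side_subpolygon Q u v : u \in Q -> v \in Q -> u != v ->
  ~~ is_edge Q [set u; v] -> subpolygon (side Q u v).
Proof.
move=> uQ vQ uv /(not_edge_gap uQ vQ uv)[q qQ uqv].
have /andP[qside _] := cbetween_side qQ uqv.
have [qu qv] : q != u /\ q != v.
  by move: uqv; rewrite -!(inj_eq (@ord_inj n)) /cbetween; lia.
by apply/card_gt2P; exists u, v, q; split; split; rewrite ?mem_side_l ?mem_side_r // eq_sym.
Qed.

Lemma is_edge_side Q u v : u \in Q -> v \in Q -> u != v -> is_edge (side Q u v) [set u; v].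
Proof.
move=> uQ vQ uv; apply/is_edgeP; exists v, u; split; last by rewrite setUC.
split; rewrite ?mem_side_l ?mem_side_r 1?eq_sym // => x.
by rewrite inE => /andP[_]; apply: contraL => /cbetween_on_arc /andP[_].
Qed.

Lemma is_edge_sideE Q u v e : u \in Q -> v \in Q -> u != v ->
  is_edge (side Q u v) e -> e = [set u; v] \/ is_edge Q e.
Proof.
move=> uQ vQ uv /is_edgeP[a [b [[aS bS ab gap] ->]]].
have [/exists_inP[x xQ axb]|nogap] := boolP [exists x in Q, cbetween a x b].
  move: aS bS; rewrite !inE => /andP[_ auv] /andP[_ buv].
  have aub := gap u (mem_side_l v uQ); have avb := gap v (mem_side_r u vQ).
  have xuv : ~~ on_arc u v x by apply: contraL axb => xuv; apply: gap; rewrite inE xQ.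
  by have [-> ->] := cbetween_off_arc uv ab auv buv aub avb axb xuv; left; rewrite setUC.
right; apply/is_edgeP; exists a, b; split=> //.
split; rewrite ?(subsetP (side_sub Q u v)) // => x xQ.
by apply: contra nogap => axb; apply/exists_inP; exists x.
Qed.

Lemma is_internal_side Q u v e : is_internal (side Q u v) e -> is_internal Q e.
Proof.
case/andP=> /andP[eS e2] notedge; rewrite /is_internal /is_diag e2 andbT.
rewrite (subset_trans eS (side_sub Q u v)); apply: contra notedge.
exact: is_edge_sub (side_sub _ _ _) eS.
Qed.

(* Let a be the vertex of S on the open arc (u, v) farthest from u and b its successor
   in S: b is not on (u, v) by maximality, not on (v, u) since ab would cross uv, and
   not u since S has a vertex on (v, u); hence b = v. *)
Lemma straddle_mem S u v : u != v -> (forall a b, next_in S a b -> ~~ crossv a b u v) ->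
  (exists2 s, s \in S & cbetween u s v) -> (exists2 s, s \in S & cbetween v s u) -> v \in S.
Proof.
move=> uv nocross [s1 s1S us1v] [s2 s2S vs2u].
have P1 : (s1 \in S) && cbetween u s1 v by rewrite s1S us1v.
case: (@arg_maxnP _ s1 (fun x => (x \in S) && cbetween u x v) (cdist u) P1).
move=> a /andP[aS uav] amax.
have s2a : s2 != a by apply: contraTneq vs2u => ->; apply: cbetween_asym.
have [b nx] := next_in_exists aS s2S s2a; have [_ bS ab gap] := nx.
have notvbu : ~~ cbetween v b u.
  by apply: contra (nocross a b nx) => vbu; apply: cbetween_crossv uav vbu.
have bu : b != u by apply: contraNneq (gap s2 s2S) => ->; apply: cbetween_opposite uav vs2u.
have notubv : ~~ cbetween u b v.
  apply/negP => ubv; case/negP: (gap s2 s2S); apply: cbetween_opposite_wrap uav vs2u _.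
  rewrite cbetween_cdist cdist_gt0 //= ltn_neqAle (inj_eq (@cdist_inj _ u)) eq_sym ab.
  by apply: amax; rewrite bS ubv.
have bv : b = v by apply/eqP; apply: contraNT notvbu => bv; apply: cbetween_complement.
by rewrite -bv.
Qed.

Lemma side_confine Q S u v : S \subset Q -> u != v ->
  (forall a b, next_in S a b -> ~~ crossv a b u v) -> ~~ is_internal S [set u; v] ->
  S \subset side Q u v \/ S \subset side Q v u.
Proof.
move=> SQ uv nocross notint.
have [/exists_inP[s2 s2S vs2u]|novu] := boolP [exists s in S, cbetween v s u]; last first.
  left; apply/subsetP=> x xS; rewrite inE (subsetP SQ _ xS) on_arc_of_not 1?eq_sym //.
  by apply: contra novu => vxu; apply/exists_inP; exists x.
have [/exists_inP[s1 s1S us1v]|nouv] := boolP [exists s in S, cbetween u s v]; last first.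
  right; apply/subsetP=> x xS; rewrite inE (subsetP SQ _ xS) on_arc_of_not //.
  by apply: contra nouv => uxv; apply/exists_inP; exists x.
case/negP: notint.
have vS : v \in S by apply: straddle_mem uv nocross _ _; [exists s1|exists s2].
have uS : u \in S.
  apply: (@straddle_mem S v u); rewrite 1?eq_sym //; [|by exists s2|by exists s1].
  by move=> a b nx; rewrite crossv_swapr; apply: nocross.
rewrite /is_internal is_diag_set2 //=; apply/negP => /is_edgeP[a [b [[_ _ _ gap] uvab]]].
case: (eq_set2 uvab) => [][ua vb]; subst a b.
  by case/negP: (gap s1 s1S).
by case/negP: (gap s2 s2S).
Qed.

End Sides.

Section Cells.
Variable n : nat.
Implicit Types (a b q s t u v x : 'I_n) (S Q e : {set 'I_n}) (E : {set {set 'I_n}}).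

Definition is_cell_in Q E S :=
  [&& S \subset Q, subpolygon S,
      [forall e, is_edge S e ==> is_edge Q e || (e \in E)]
    & [forall e in E, ~~ is_internal S e]].

Definition cells_in Q E := [set S | is_cell_in Q E S].

Lemma cells_inP Q E S : S \in cells_in Q E <->
  [/\ S \subset Q, subpolygon S, (forall e, is_edge S e -> is_edge Q e \/ e \in E)
    & (forall e, e \in E -> ~~ is_internal S e)].
Proof.
rewrite inE; split=> [/and4P[SQ Sp /forallP Sedge /forall_inP Sint]|[SQ Sp Sedge Sint]].
  by split=> // e /(implyP (Sedge e)) /orP.
apply/and4P; split=> //; last exact/forall_inP.
by apply/forallP=> e; apply/implyP=> /Sedge[|] ->; rewrite ?orbT.
Qed.

Lemma cells_inT E : cells_in [set: 'I_n] E = cells E.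
Proof. by apply/setP=> S; rewrite !inE /is_cell_in /is_cell subsetT. Qed.

Lemma cells_in0 Q : subpolygon Q -> cells_in Q set0 = [set Q].
Proof.
move=> Qp; apply/setP=> S; rewrite inE; apply/idP/eqP => [Scell|->]; last first.
  by apply/cells_inP; split=> // e; [left|rewrite inE].
have /cells_inP[SQ Sp Sedge _] := Scell.
apply/eqP; rewrite eqEsubset SQ; apply/subsetP=> q qQ; apply: contraT => qS.
have [s [t [st_next sqt]]] := gap_next_in qS (ltnW Sp).
have [sS tS st gapS] := st_next.
have /Sedge[|] : is_edge S [set s; t] by apply/is_edgeP; exists s, t.
  2: by rewrite inE.
case/is_edgeP=> a [b [[_ _ _ gapQ] stab]].
case: (eq_set2 stab) => [][sa tb]; subst a b; first by case/negP: (gapQ q qQ).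
have [x] : exists x, x \in S :\ s :\ t.
  apply/set0Pn; rewrite -card_gt0; move: Sp.
  by rewrite /subpolygon (cardsD1 s S) sS (cardsD1 t (S :\ s)) !inE tS eq_sym st.
rewrite !inE => /and3P[xt xs xS].
case/negP: (gapQ x (subsetP SQ x xS)).
by apply: cbetween_complement; rewrite // 1?eq_sym //; apply: gapS.
Qed.

Definition side_diags E Q u v :=
  [set e in E | (e \subset side Q u v) && (e != [set u; v])].

Lemma side_diags_sub E Q u v : side_diags E Q u v \subset E.
Proof. by apply/subsetP=> e; rewrite inE => /andP[]. Qed.

Lemma side_diags_card E Q u v : [set u; v] \in E -> (#|side_diags E Q u v| < #|E|)%N.
Proof.
move=> uvE; apply/proper_card/properP; split; first exact: side_diags_sub.
by exists [set u; v]; rewrite // inE eqxx !andbF.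
Qed.

Lemma side_diags_dissection E Q u v : is_dissection Q E -> u \in Q -> v \in Q -> u != v ->
  is_dissection (side Q u v) (side_diags E Q u v).
Proof.
move=> [Eint Ecross] uQ vQ uv; split=> [e|e e']; last first.
  by move=> /(subsetP (side_diags_sub _ _ _ _)) eE /(subsetP (side_diags_sub _ _ _ _));
    apply: Ecross.
rewrite inE => /and3P[eE eside euv]; have /andP[/andP[_ e2] notedge] := Eint e eE.
rewrite /is_internal /is_diag eside e2; apply: contra notedge.
by case/(is_edge_sideE uQ vQ uv) => [e_uv|//]; rewrite e_uv eqxx in euv.
Qed.

Section Split.
Variables (Q : {set 'I_n}) (E : {set {set 'I_n}}) (u v : 'I_n).
Hypotheses (dE : is_dissection Q E) (uvE : [set u; v] \in E).
Hypotheses (uQ : u \in Q) (vQ : v \in Q) (uv : u != v).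

Lemma dissection_split e : e \in E ->
  [\/ e = [set u; v], e \in side_diags E Q u v | e \in side_diags E Q v u].
Proof.
have [Eint Ecross] := dE; move=> eE.
have [->|euv] := eqVneq e [set u; v]; first by constructor 1.
have /andP[/is_diagP[x [y [xQ yQ _ exy]]] _] := Eint e eE; subst e.
have := Ecross _ _ eE uvE; rewrite cross_setE => /(nocross_on_arc uv).
case/orP=> /andP[xarc yarc]; [constructor 2|constructor 3];
  by rewrite inE eE ?euv 1?(setUC [set v]) ?euv subUset !sub1set !inE xQ yQ xarc yarc.
Qed.

Lemma cell_next_nocross S : S \in cells_in Q E ->
  forall a b, next_in S a b -> ~~ crossv a b u v.
Proof.
case/cells_inP=> _ _ Sedge _ a b nx.
have /Sedge[Qedge|abE] : is_edge S [set a; b] by apply/is_edgeP; exists a, b.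
  exact: is_edge_nocross Qedge uQ vQ.
by rewrite -cross_setE; apply: dE.2.
Qed.

Lemma cell_confine S : S \in cells_in Q E -> S \subset side Q u v \/ S \subset side Q v u.
Proof.
move=> Scell; have /cells_inP[SQ _ _ Sint] := Scell.
by apply: side_confine SQ uv (cell_next_nocross Scell) (Sint _ uvE).
Qed.

Lemma cell_in_side S : S \in cells_in Q E -> S \subset side Q u v ->
  S \in cells_in (side Q u v) (side_diags E Q u v).
Proof.
case/cells_inP=> SQ Sp Sedge Sint Sside; apply/cells_inP; split=> // [e eS|e].
  have eS' : e \subset S by case/andP: (is_edge_diag eS).
  case: (Sedge e eS) => [Qedge|eE].
    by left; apply: is_edge_sub (side_sub Q u v) (subset_trans eS' Sside) Qedge.
  have [->|euv] := eqVneq e [set u; v]; first by left; apply: is_edge_side.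
  by right; rewrite inE eE euv (subset_trans eS' Sside).
by move=> /(subsetP (side_diags_sub _ _ _ _)); apply: Sint.
Qed.

Lemma cell_of_side S : S \in cells_in (side Q u v) (side_diags E Q u v) -> S \in cells_in Q E.
Proof.
case/cells_inP=> Sside Sp Sedge Sint; apply/cells_inP; split=> //.
- exact: subset_trans Sside (side_sub _ _ _).
- move=> e /Sedge[/(is_edge_sideE uQ vQ uv)[->|]|/(subsetP (side_diags_sub _ _ _ _))];
  by [right|left|right].
- move=> e /dissection_split[->|/Sint //|evu].
    apply: contraL (is_edge_side uQ vQ uv) => /andP[/andP[uvS _] notedge].
    by apply: contra notedge; apply: is_edge_sub Sside uvS.
  apply/negP => /andP[/andP[eS e2] _].
  have := side_inter uv (subset_trans eS Sside) _ (eqP e2).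
  by move: evu; rewrite inE (setUC [set v]) => /and3P[_ evu /eqP + ] /(_ evu).
Qed.

End Split.

Lemma cells_in_split Q E u v S : is_dissection Q E -> [set u; v] \in E ->
  u \in Q -> v \in Q -> u != v ->
  S \in cells_in Q E <->
  S \in cells_in (side Q u v) (side_diags E Q u v) \/
  S \in cells_in (side Q v u) (side_diags E Q v u).
Proof.
move=> dE uvE uQ vQ uv.
have vuE : [set v; u] \in E by rewrite setUC.
have vu : v != u by rewrite eq_sym.
split=> [Scell|[] Scell]; [|exact (cell_of_side dE uvE uQ vQ uv Scell)
                          |exact (cell_of_side dE vuE vQ uQ vu Scell)].
by case: (cell_confine dE uvE uQ vQ uv Scell) => Sside; [left|right]; apply: cell_in_side.
Qed.

Lemma dissection_ind (P : {set 'I_n} -> {set {set 'I_n}} -> Prop) :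
  (forall Q, subpolygon Q -> P Q set0) ->
  (forall Q E u v, subpolygon Q -> is_dissection Q E -> [set u; v] \in E ->
     u \in Q -> v \in Q -> u != v ->
     P (side Q u v) (side_diags E Q u v) -> P (side Q v u) (side_diags E Q v u) -> P Q E) ->
  forall Q E, subpolygon Q -> is_dissection Q E -> P Q E.
Proof.
move=> P0 Psplit Q E; move: {2}#|E| (leqnn #|E|) => k; elim: k Q E => [|k IH] Q E.
  by rewrite leqn0 cards_eq0 => /eqP -> Qp _; apply: P0.
move=> Ek Qp dE; have [->|[e eE]] := set_0Vmem E; first exact: P0.
have /andP[/is_diagP[u [v [uQ vQ uv euv]]] notedge] := dE.1 e eE; subst e.
have vuE : [set v; u] \in E by rewrite setUC.
have side_IH x y : [set x; y] \in E -> x \in Q -> y \in Q -> x != y ->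
    ~~ is_edge Q [set x; y] -> P (side Q x y) (side_diags E Q x y).
  move=> xyE xQ yQ xy xynotedge; apply: IH; last exact: side_diags_dissection.
    by rewrite -ltnS; apply: leq_trans (side_diags_card _ xyE) Ek.
  exact: side_subpolygon.
apply: (Psplit Q E u v) => //; first exact: side_IH.
by apply: side_IH; rewrite // 1?eq_sym // setUC.
Qed.

End Cells.

Lemma edge_in_cell n (Q : {set 'I_n}) (E : {set {set 'I_n}}) :
  subpolygon Q -> is_dissection Q E ->
  forall e, is_edge Q e -> exists2 S, S \in cells_in Q E & e \subset S.
Proof.
move: Q E; apply: dissection_ind => [Q Qp e Qedge|Q E u v _ dE uvE uQ vQ uv IHuv IHvu e Qedge].
  by exists Q; rewrite ?cells_in0 ?inE //; case/andP: (is_edge_diag Qedge).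
have /is_edgeP[a [b [ab_next eab]]] := Qedge; have [aQ bQ _ _] := ab_next.
have in_side x y : on_arc x y a -> on_arc x y b -> e \subset side Q x y.
  by move=> xya xyb; rewrite eab subUset !sub1set !inE aQ bQ xya xyb.
have vuE : [set v; u] \in E by rewrite setUC.
have vu : v != u by rewrite eq_sym.
case/orP: (nocross_on_arc uv (next_in_nocross ab_next uQ vQ)) => /andP[xa xb].
  have [S Scell eS] := IHuv e (is_edge_sub (side_sub Q u v) (in_side _ _ xa xb) Qedge).
  by exists S => //; exact (cell_of_side dE uvE uQ vQ uv Scell).
have [S Scell eS] := IHvu e (is_edge_sub (side_sub Q v u) (in_side _ _ xa xb) Qedge).
by exists S => //; exact (cell_of_side dE vuE vQ uQ vu Scell).
Qed.

Section Refinement.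
Variables (n : nat) (Dsub : {set 'I_n} -> {set {set 'I_n}}).
Implicit Types (u v x : 'I_n) (S T Q e : {set 'I_n}) (E : {set {set 'I_n}}).

Definition refinement Q E := E :|: \bigcup_(S in cells_in Q E) Dsub S.

Definition cells_dissected Q E := forall S, S \in cells_in Q E -> is_dissection S (Dsub S).

Lemma refinementP Q E e :
  e \in refinement Q E <-> e \in E \/ exists2 S, S \in cells_in Q E & e \in Dsub S.
Proof.
rewrite inE; split=> [/orP[|/bigcupP[S]]|[->//|[S Scell eS]]]; [by left|by right; exists S|].
by apply/orP; right; apply/bigcupP; exists S.
Qed.

Lemma refinement0 Q : subpolygon Q -> refinement Q set0 = Dsub Q.
Proof. by move=> Qp; rewrite /refinement cells_in0 // big_set1 set0U. Qed.

Lemma refinement_diag Q E e : is_dissection Q E -> cells_dissected Q E ->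
  e \in refinement Q E -> is_diag Q e.
Proof.
move=> [Eint _] Edis /refinementP[/Eint/andP[]//|[S Scell eS]].
have /cells_inP[SQ _ _ _] := Scell.
by case/andP: ((Edis S Scell).1 e eS) => /andP[eS' e2] _; rewrite /is_diag e2 (subset_trans eS' SQ).
Qed.

Lemma cell_diags_disjoint Q E S : S \in cells_in Q E -> is_dissection S (Dsub S) ->
  [disjoint E & Dsub S].
Proof.
case/cells_inP=> _ _ _ Sint [Dint _]; apply/pred0P=> e /=.
by apply/negP=> /andP[/Sint/negP + /Dint]; apply.
Qed.

Section Split.
Variables (Q : {set 'I_n}) (E : {set {set 'I_n}}) (u v : 'I_n).
Hypotheses (dE : is_dissection Q E) (uvE : [set u; v] \in E).
Hypotheses (uQ : u \in Q) (vQ : v \in Q) (uv : u != v).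

Lemma cells_dissected_side : cells_dissected Q E ->
  cells_dissected (side Q u v) (side_diags E Q u v).
Proof. by move=> Edis S /(cell_of_side dE uvE uQ vQ uv); apply: Edis. Qed.

Lemma refinement_side_sub : refinement (side Q u v) (side_diags E Q u v) \subset refinement Q E.
Proof.
apply/subsetP=> e /refinementP[/(subsetP (side_diags_sub _ _ _ _)) eE|[S Scell eS]];
  apply/refinementP; first by left.
by right; exists S => //; exact (cell_of_side dE uvE uQ vQ uv Scell).
Qed.

Lemma refinement_side_subset e : cells_dissected Q E ->
  e \in refinement (side Q u v) (side_diags E Q u v) -> e \subset side Q u v.
Proof.
move=> Edis /refinement_diag/andP[] //; first exact: side_diags_dissection.
exact: cells_dissected_side.
Qed.

End Split.

Lemma refinement_split Q E u v e : is_dissection Q E -> [set u; v] \in E ->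
  u \in Q -> v \in Q -> u != v -> e \in refinement Q E ->
  [\/ e = [set u; v], e \in refinement (side Q u v) (side_diags E Q u v)
    | e \in refinement (side Q v u) (side_diags E Q v u)].
Proof.
move=> dE uvE uQ vQ uv /refinementP[eE|[S Scell eS]].
  case: (dissection_split dE uvE uv eE) => [->|he|he];
    [by constructor 1|constructor 2|constructor 3]; by apply/refinementP; left.
case: (cell_confine dE uvE uQ vQ uv Scell) => Sside; [constructor 2|constructor 3];
  apply/refinementP; right; exists S => //; apply: cell_in_side => //; by rewrite eq_sym.
Qed.

Lemma sides_nocross Q u v e e' : u != v ->
  e \subset side Q u v -> e' \subset side Q v u -> ~~ cross_set e e'.
Proof.
move=> uv euv e'vu; apply/existsP => -[a /existsP[b /existsP[c /existsP[d]]]].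
case/and3P=> /eqP eab /eqP ecd; apply/negP; move: euv e'vu.
rewrite eab ecd !subUset !sub1set !inE.
move=> /andP[/andP[_ a_] /andP[_ b_]] /andP[/andP[_ c_] /andP[_ d_]].
exact: (on_arcs_nocross uv).
Qed.

Lemma refinement_dissection Q E : subpolygon Q -> is_dissection Q E ->
  cells_dissected Q E -> is_dissection Q (refinement Q E).
Proof.
move: Q E; apply: dissection_ind => [Q Qp Qdis|Q E u v _ dE uvE uQ vQ uv IHuv IHvu Edis].
  by rewrite refinement0 //; apply: Qdis; rewrite cells_in0 ?inE.
have vuE : [set v; u] \in E by rewrite setUC.
have vu : v != u by rewrite eq_sym.
have [int_uv cross_uv] := IHuv (cells_dissected_side dE uvE uQ vQ uv Edis).
have [int_vu cross_vu] := IHvu (cells_dissected_side dE vuE vQ uQ vu Edis).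
have sub_uv := refinement_side_subset dE uvE uQ vQ uv Edis.
have sub_vu := refinement_side_subset dE vuE vQ uQ vu Edis.
have uv_uv : [set u; v] \subset side Q u v.
  by rewrite subUset !sub1set (mem_side_l v uQ) (mem_side_r u vQ).
have uv_vu : [set u; v] \subset side Q v u.
  by rewrite subUset !sub1set (mem_side_r v uQ) (mem_side_l u vQ).
have opp e e' : e \subset side Q u v -> e' \subset side Q v u ->
    ~~ cross_set e e' && ~~ cross_set e' e.
  by move=> euv e'vu; have nc := sides_nocross uv euv e'vu; rewrite nc -cross_setC nc.
split=> [e|e e'].
  case/(refinement_split dE uvE uQ vQ uv) => [->|/int_uv|/int_vu];
    [exact: dE.1 _ uvE|exact: is_internal_side|exact: is_internal_side].
move=> eD e'D.
case: (refinement_split dE uvE uQ vQ uv eD) => [->|/[dup] he /sub_uv euv|/[dup] he /sub_vu evu];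
case: (refinement_split dE uvE uQ vQ uv e'D) =>
  [->|/[dup] he' /sub_uv e'uv|/[dup] he' /sub_vu e'vu].
- by have /andP[] := opp _ _ uv_uv uv_vu.
- by have /andP[] := opp _ _ e'uv uv_vu.
- by have /andP[] := opp _ _ uv_uv e'vu.
- by have /andP[] := opp _ _ euv uv_vu.
- exact: cross_uv.
- by have /andP[] := opp _ _ euv e'vu.
- by have /andP[] := opp _ _ uv_uv evu.
- by have /andP[] := opp _ _ e'uv evu.
- exact: cross_vu.
Qed.

Lemma cells_in_disjoint Q E : subpolygon Q -> is_dissection Q E -> cells_dissected Q E ->
  forall S T, S \in cells_in Q E -> T \in cells_in Q E -> S != T -> [disjoint Dsub S & Dsub T].
Proof.
move: Q E; apply: dissection_ind => [Q Qp _ S T|Q E u v _ dE uvE uQ vQ uv IHuv IHvu Edis].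
  by rewrite cells_in0 // !inE => /eqP-> /eqP->; rewrite eqxx.
have vuE : [set v; u] \in E by rewrite setUC.
have vu : v != u by rewrite eq_sym.
have across S T : S \in cells_in (side Q u v) (side_diags E Q u v) ->
    T \in cells_in (side Q v u) (side_diags E Q v u) -> [disjoint Dsub S & Dsub T].
  move=> Sc Tc; apply/pred0P=> e /=; apply/negP=> /andP[eS eT].
  have Scell := cell_of_side dE uvE uQ vQ uv Sc.
  have /cells_inP[Sside _ _ _] := Sc; have /cells_inP[Tside _ _ _] := Tc.
  have Sint := (Edis S Scell).1 e eS; have /andP[/andP[eS' e2] _] := Sint.
  have /andP[/andP[eT' _] _] := (Edis T (cell_of_side dE vuE vQ uQ vu Tc)).1 e eT.
  have euv := side_inter uv (subset_trans eS' Sside) (subset_trans eT' Tside) (eqP e2).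
  by have /cells_inP[_ _ _ /(_ _ uvE)] := Scell; rewrite -euv Sint.
move=> S T /(cells_in_split _ dE uvE uQ vQ uv) [] Sc /(cells_in_split _ dE uvE uQ vQ uv) [] Tc ST.
- exact: IHuv (cells_dissected_side dE uvE uQ vQ uv Edis) S T Sc Tc ST.
- exact: across.
- by rewrite disjoint_sym; apply: across.
- exact: IHvu (cells_dissected_side dE vuE vQ uQ vu Edis) S T Sc Tc ST.
Qed.

End Refinement.

Declare Scope semifield_scope.

Section Semifield.
Variables (K : Type) (add mul : K -> K -> K) (one : K).
Hypotheses (addA : associative add) (addC : commutative add).
Hypotheses (mulA : associative mul) (mulC : commutative mul) (mul1 : left_id one mul).
Hypothesis mulDl : left_distributive mul add.
Hypothesis mulV : forall x, exists y, mul x y = one.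

Local Notation "x + y" := (add x y) : semifield_scope.
Local Notation "x * y" := (mul x y) : semifield_scope.
Local Open Scope semifield_scope.

Lemma mulDr : right_distributive mul add.
Proof. by move=> x y z; rewrite mulC mulDl !(mulC x). Qed.

Lemma mulCA : left_commutative mul.
Proof. by move=> x y z; rewrite !mulA (mulC x). Qed.

Lemma mulAC4 x y z w : (x * y) * (z * w) = (x * w) * (y * z).
Proof. by rewrite -!mulA (mulC z w) (mulCA y w z). Qed.

Lemma mulK x i y : x * i = one -> (y * x) * i = y.
Proof. by move=> xi; rewrite -mulA xi mulC mul1. Qed.

Lemma mulKr x i y : x * i = one -> (y * i) * x = y.
Proof. by move=> xi; rewrite -mulA (mulC i) xi mulC mul1. Qed.

Lemma mulIr x i y z : x * i = one -> y * x = z * x -> y = z.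
Proof. by move=> xi yz; rewrite -(mulK y xi) -(mulK z xi) yz. Qed.

(* [x_y] stands for the value on the diagonal {x, y}, and [i] for the inverse of the
   value on the cut {u, v}. *)
Lemma exchange_inner i a_u a_v a_c a_d b_u b_v c_u c_v d_u d_v cd :
  a_u * cd = a_c * d_u + a_d * c_u -> a_v * cd = a_c * d_v + a_d * c_v ->
  ((a_u * b_v + a_v * b_u) * i) * cd =
  a_c * ((d_u * b_v + d_v * b_u) * i) + a_d * ((c_u * b_v + c_v * b_u) * i).
Proof.
move=> Ru Rv; rewrite -mulA mulDl !mulDl !mulDr (mulAC4 a_u) (mulAC4 a_v) Ru Rv !mulDl -!mulA.
by rewrite -!addA; congr add; rewrite !addA; congr add; apply: addC.
Qed.

Lemma exchange_end x i a_u a_v a_d b_u b_v d_u d_v : x * i = one ->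
  a_v * d_u = a_u * d_v + a_d * x ->
  ((a_u * b_v + a_v * b_u) * i) * d_u =
  a_u * ((d_u * b_v + d_v * b_u) * i) + a_d * b_u.
Proof.
move=> xi R; rewrite -mulA !mulDl mulDr (mulAC4 a_v) R mulDl -addA.
congr add; first by rewrite -!mulA (mulC i d_u) (mulCA b_v).
congr add; first by rewrite -!mulA.
by rewrite -mulA (mulCA x) xi (mulC b_u) mul1.
Qed.

Variable n : nat.
Implicit Types (a b c d u v x y : 'I_n) (S Q e : {set 'I_n}) (f g : {set 'I_n} -> K).

Definition ptolemy f a b c d :=
  f [set a; b] * f [set c; d] = f [set a; c] * f [set b; d] + f [set a; d] * f [set b; c].

Lemma ptolemy_swapr f a b c d : ptolemy f a b c d -> ptolemy f a b d c.
Proof. by rewrite /ptolemy (setUC [set d]) addC. Qed.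

Lemma ptolemy_swapl f a b c d : ptolemy f a b c d -> ptolemy f b a c d.
Proof.
move=> R; rewrite /ptolemy (setUC [set b]) R addC.
by rewrite (mulC (f [set a; d])) (mulC (f [set a; c])).
Qed.

Lemma ptolemy_eq_on S f g a b c d :
  (forall x y, x \in S -> y \in S -> x != y -> f [set x; y] = g [set x; y]) ->
  a \in S -> b \in S -> c \in S -> d \in S -> crossv a b c d ->
  ptolemy g a b c d -> ptolemy f a b c d.
Proof.
move=> fg aS bS cS dS /crossv_distinct[[ab [ac ad]] [bc [bd cd]]].
by rewrite /ptolemy !fg.
Qed.

Section GlueSide.
Variables (Q : {set 'I_n}) (u v : 'I_n) (f f1 f2 : {set 'I_n} -> K) (i : K).
Hypotheses (uv : u != v) (uQ : u \in Q) (vQ : v \in Q) (f1uvK : f1 [set u; v] * i = one).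
Hypothesis f_left : forall x y, x \in side Q u v -> y \in side Q u v -> x != y ->
  f [set x; y] = f1 [set x; y].
Hypothesis f_right : forall x y, x \in side Q v u -> y \in side Q v u -> x != y ->
  f [set x; y] = f2 [set x; y].
(* The exchange relation of {a, b} against the cut {u, v}, solved for f(a, b). *)
Hypothesis f_across : forall a b, a \in Q -> b \in Q -> cbetween u a v -> cbetween v b u ->
  f [set a; b] = (f1 [set a; u] * f2 [set b; v] + f1 [set a; v] * f2 [set b; u]) * i.

Let uside := mem_side_l v uQ.
Let vside := mem_side_r u vQ.
Let uside' := mem_side_r v uQ.
Let vside' := mem_side_l u vQ.

Lemma f_across_r a b : a \in Q -> b \in Q -> cbetween u a v -> cbetween v b u ->
  f [set b; a] = (f1 [set a; u] * f2 [set b; v] + f1 [set a; v] * f2 [set b; u]) * i.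
Proof. by move=> *; rewrite setUC f_across. Qed.

Lemma ptolemy_cut_strict a b : a \in Q -> b \in Q -> cbetween u a v -> cbetween v b u ->
  ptolemy f a b u v.
Proof.
move=> aQ bQ uav vbu.
have /andP[a1 a2] := cbetween_side aQ uav; have /andP[b2 b1] := cbetween_side bQ vbu.
have /memPnC a_ne := a2; have /memPnC b_ne := b1.
rewrite /ptolemy f_across // (f_left uside vside uv) (f_left a1 uside (a_ne _ uside'))
  (f_left a1 vside (a_ne _ vside')) (f_right b2 vside' (b_ne _ vside))
  (f_right b2 uside' (b_ne _ uside)).
exact: mulKr.
Qed.

Section Across.
Variables (D1 : {set {set 'I_n}}) (a b : 'I_n).
Hypotheses (W1 : weak_frieze add mul (side Q u v) D1 f1).
Hypotheses (aQ : a \in Q) (bQ : b \in Q) (uav : cbetween u a v) (vbu : cbetween v b u).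

Let a1 : a \in side Q u v := proj1 (andP (cbetween_side aQ uav)).

Lemma ptolemy_across_inner c d : c \in Q -> d \in Q -> cbetween u c v -> cbetween u d v ->
  crossv a b c d -> [set c; d] \in D1 -> ptolemy f a b c d.
Proof.
move=> cQ dQ ucv udv cr cdD.
have /andP[c1 /memPnC c_ne] := cbetween_side cQ ucv.
have /andP[d1 /memPnC d_ne] := cbetween_side dQ udv.
have [[_ [ac ad]] [_ [_ cd]]] := crossv_distinct cr.
have /andP[cr_u cr_v] := crossv_shift uav vbu ucv udv cr.
have Ru : ptolemy f1 a u c d := W1 a1 uside c1 d1 cr_u cdD.
have Rv : ptolemy f1 a v c d := W1 a1 vside c1 d1 cr_v cdD.
move: Ru Rv; rewrite /ptolemy !(setUC [set u]) !(setUC [set v]) => Ru Rv.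
rewrite f_across // (f_left c1 d1 cd) (f_left a1 c1 ac) (f_left a1 d1 ad).
by rewrite (f_across_r dQ) // (f_across_r cQ) //; apply: exchange_inner.
Qed.

Lemma ptolemy_across_u d : d \in Q -> cbetween u d v ->
  crossv a b u d -> [set u; d] \in D1 -> ptolemy f a b u d.
Proof.
move=> dQ udv cr udD.
have /andP[d1 /memPnC d_ne] := cbetween_side dQ udv.
have /andP[_ /memPnC a_ne] := cbetween_side aQ uav.
have /andP[b2 /memPnC b_ne] := cbetween_side bQ vbu.
have [[_ [_ ad]] _] := crossv_distinct cr.
have R : ptolemy f1 a v u d := W1 a1 vside uside d1 (crossv_shift_u uav vbu udv cr) udD.
move: R; rewrite /ptolemy (setUC [set u] [set d]) (setUC [set v] [set d]) (setUC [set v] [set u]).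
move=> R; rewrite (f_across aQ bQ uav vbu).
rewrite (f_left d1 uside (d_ne _ uside')) (f_left a1 uside (a_ne _ uside')) (f_left a1 d1 ad).
rewrite (f_across_r dQ bQ udv vbu) (f_right b2 uside' (b_ne _ uside)).
exact: exchange_end f1uvK R.
Qed.

Lemma ptolemy_across_v d : d \in Q -> cbetween u d v ->
  crossv a b v d -> [set v; d] \in D1 -> ptolemy f a b v d.
Proof.
move=> dQ udv cr vdD.
have /andP[d1 /memPnC d_ne] := cbetween_side dQ udv.
have /andP[_ /memPnC a_ne] := cbetween_side aQ uav.
have /andP[b2 /memPnC b_ne] := cbetween_side bQ vbu.
have [[_ [_ ad]] _] := crossv_distinct cr.
have R : ptolemy f1 a u v d := W1 a1 uside vside d1 (crossv_shift_v uav vbu udv cr) vdD.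
move: R; rewrite /ptolemy (setUC [set v] [set d]) (setUC [set u] [set d]) => R.
rewrite (f_across aQ bQ uav vbu).
rewrite (f_left d1 vside (d_ne _ vside')) (f_left a1 vside (a_ne _ vside')) (f_left a1 d1 ad).
rewrite (f_across_r dQ bQ udv vbu) (f_right b2 vside' (b_ne _ vside)).
rewrite (addC (f1 [set a; u] * _)) (addC (f1 [set d; u] * _)).
exact: exchange_end f1uvK R.
Qed.

Let side_strict x : x \in side Q u v -> x != u -> x != v -> (x \in Q) && cbetween u x v.
Proof. by rewrite inE => /andP[xQ xuv] xu xv; rewrite xQ on_arc_cbetween. Qed.

Lemma ptolemy_across_strict c d : c \in side Q u v -> d \in side Q u v -> d != u -> d != v ->
  crossv a b c d -> [set c; d] \in D1 -> ptolemy f a b c d.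
Proof.
move=> c1 d1 du dv cr cdD; have /andP[dQ udv] := side_strict d1 du dv.
have [cu|cu] := eqVneq c u; first by subst c; apply: ptolemy_across_u.
have [cv|cv] := eqVneq c v; first by subst c; apply: ptolemy_across_v.
have /andP[cQ ucv] := side_strict c1 cu cv.
exact: ptolemy_across_inner.
Qed.

Lemma ptolemy_across c d : c \in side Q u v -> d \in side Q u v ->
  crossv a b c d -> [set c; d] \in D1 -> [set c; d] != [set u; v] -> ptolemy f a b c d.
Proof.
move=> c1 d1 cr cdD cduv; have [_ [_ [_ cd]]] := crossv_distinct cr.
have [du|du] := eqVneq d u.
  subst d; apply/ptolemy_swapr/ptolemy_across_strict; rewrite // 1?crossv_swapr 1?setUC //.
  by apply: contraNneq cduv => ->; rewrite setUC.
have [dv|dv] := eqVneq d v; last exact: ptolemy_across_strict.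
subst d; apply/ptolemy_swapr/ptolemy_across_strict; rewrite // 1?crossv_swapr 1?setUC //.
by apply: contraNneq cduv => ->.
Qed.

End Across.

Lemma ptolemy_side D1 a b c d : weak_frieze add mul (side Q u v) D1 f1 ->
  a \in Q -> b \in Q -> c \in side Q u v -> d \in side Q u v ->
  crossv a b c d -> [set c; d] \in D1 -> [set c; d] != [set u; v] -> ptolemy f a b c d.
Proof.
move=> W1 aQ bQ c1 d1 cr cdD cduv; have vu : v != u by rewrite eq_sym.
have not_both2 : ~~ ((a \in side Q v u) && (b \in side Q v u)).
  apply/andP => -[a2 b2]; move: cr; apply/negP; rewrite crossv_sym.
  move: c1 d1 a2 b2; rewrite !inE => /andP[_ c_] /andP[_ d_] /andP[_ a_] /andP[_ b_].
  exact: (on_arcs_nocross uv).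
have across x y : x \in Q -> y \in Q -> x \notin side Q v u -> y \notin side Q u v ->
    crossv x y c d -> ptolemy f x y c d.
  move=> xQ yQ x2 y1 cr'.
  have uxv := side_cbetween (side_cover vu xQ x2) x2.
  have vyu := side_cbetween (side_cover uv yQ y1) y1.
  exact (ptolemy_across W1 xQ yQ uxv vyu c1 d1 cr' cdD cduv).
have [b1|b1] := boolP (b \in side Q u v); last first.
  apply: across => //; apply: contra not_both2 => a2.
  by rewrite a2 (side_cover uv bQ b1).
have [a1|a1] := boolP (a \in side Q u v).
  exact (ptolemy_eq_on f_left a1 b1 c1 d1 cr (W1 a b c d a1 b1 c1 d1 cr cdD)).
apply/ptolemy_swapl/across; rewrite // 1?crossv_swapl //.
by apply: contra not_both2 => b2; rewrite b2 (side_cover uv aQ a1).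
Qed.

Lemma ptolemy_cut a b : a \in Q -> b \in Q -> crossv a b u v -> ptolemy f a b u v.
Proof.
move=> aQ bQ /crossv_cbetween/orP[/andP[uav vbu]|/andP[vau ubv]].
  exact: ptolemy_cut_strict.
exact/ptolemy_swapl/ptolemy_cut_strict.
Qed.

End GlueSide.

Section Glue.
Variables (Q : {set 'I_n}) (u v : 'I_n) (f f1 f2 : {set 'I_n} -> K) (i : K).
Hypotheses (uv : u != v) (uQ : u \in Q) (vQ : v \in Q).
Hypotheses (f1uvK : f1 [set u; v] * i = one) (f12 : f1 [set u; v] = f2 [set u; v]).
Hypothesis f_left : forall x y, x \in side Q u v -> y \in side Q u v -> x != y ->
  f [set x; y] = f1 [set x; y].
Hypothesis f_right : forall x y, x \in side Q v u -> y \in side Q v u -> x != y ->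
  f [set x; y] = f2 [set x; y].
Hypothesis f_across : forall a b, a \in Q -> b \in Q -> cbetween u a v -> cbetween v b u ->
  f [set a; b] = (f1 [set a; u] * f2 [set b; v] + f1 [set a; v] * f2 [set b; u]) * i.

Let ptolemy_f_cut := ptolemy_cut uv uQ vQ f1uvK f_left f_right f_across.

Lemma glue_weak_frieze (D D1 D2 : {set {set 'I_n}}) :
  weak_frieze add mul (side Q u v) D1 f1 -> weak_frieze add mul (side Q v u) D2 f2 ->
  (forall e, e \in D -> [\/ e = [set u; v], e \in D1 | e \in D2]) ->
  (forall e, e \in D1 -> e \subset side Q u v) -> (forall e, e \in D2 -> e \subset side Q v u) ->
  weak_frieze add mul Q D f.
Proof.
move=> W1 W2 Dsplit D1side D2side a b c d aQ bQ cQ dQ cr cdD.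
have [cduv|cduv] := eqVneq [set c; d] [set u; v].
  case: (eq_set2 cduv) => [][cu dv]; subst c d; first exact: ptolemy_f_cut.
  by apply/ptolemy_swapr/ptolemy_f_cut; rewrite // crossv_swapr.
case: (Dsplit _ cdD) => [/eqP|cdD1|cdD2]; first by rewrite (negbTE cduv).
  move: (D1side _ cdD1); rewrite subUset !sub1set => /andP[c1 d1].
  exact (ptolemy_side uv uQ vQ f1uvK f_left f_right f_across W1 aQ bQ c1 d1 cr cdD1 cduv).
move: (D2side _ cdD2); rewrite subUset !sub1set => /andP[c2 d2].
have f2vuK : f2 [set v; u] * i = one by rewrite setUC -f12.
have f_across' a' b' : a' \in Q -> b' \in Q -> cbetween v a' u -> cbetween u b' v ->
    f [set a'; b'] = (f2 [set a'; v] * f1 [set b'; u] + f2 [set a'; u] * f1 [set b'; v]) * i.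
  move=> aQ' bQ' va'u ub'v; rewrite setUC (f_across bQ' aQ' ub'v va'u).
  by rewrite (mulC (f1 [set b'; u])) (mulC (f1 [set b'; v])).
have cdvu : [set c; d] != [set v; u] by rewrite (setUC [set v]).
have vu : v != u by rewrite eq_sym.
exact (ptolemy_side vu vQ uQ f2vuK f_right f_left f_across' W2 aQ bQ c2 d2 cr cdD2 cdvu).
Qed.

Lemma glue_unique g :
  (forall x y, x \in side Q u v -> y \in side Q u v -> x != y -> g [set x; y] = f1 [set x; y]) ->
  (forall x y, x \in side Q v u -> y \in side Q v u -> x != y -> g [set x; y] = f2 [set x; y]) ->
  (forall a b, a \in Q -> b \in Q -> crossv a b u v -> ptolemy g a b u v) ->
  forall e, is_diag Q e -> g e = f e.
Proof.
move=> g_left g_right g_cut.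
have gf1 x y : x \in side Q u v -> y \in side Q u v -> x != y -> g [set x; y] = f [set x; y].
  by move=> x1 y1 xy; rewrite g_left // f_left.
have gf2 x y : x \in side Q v u -> y \in side Q v u -> x != y -> g [set x; y] = f [set x; y].
  by move=> x2 y2 xy; rewrite g_right // f_right.
have uside := mem_side_l v uQ; have vside := mem_side_r u vQ.
have uside' := mem_side_r v uQ; have vside' := mem_side_l u vQ.
have across x y : x \in Q -> y \in Q -> cbetween u x v -> cbetween v y u ->
    g [set x; y] = f [set x; y].
  move=> xQ yQ uxv vyu; have cr := cbetween_crossv uxv vyu.
  have /andP[x1 /memPnC x_ne] := cbetween_side xQ uxv.
  have /andP[y2 /memPnC y_ne] := cbetween_side yQ vyu.
  apply: (mulIr f1uvK); rewrite -(f_left uside vside uv) -{1}(gf1 _ _ uside vside uv).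
  rewrite (g_cut _ _ xQ yQ cr) (ptolemy_f_cut xQ yQ cr).
  by rewrite (gf1 _ _ x1 uside (x_ne _ uside')) (gf1 _ _ x1 vside (x_ne _ vside'))
    (gf2 _ _ y2 uside' (y_ne _ uside)) (gf2 _ _ y2 vside' (y_ne _ vside)).
move=> e /is_diagP[x [y [xQ yQ xy ->]]].
have [x1|x1] := boolP (x \in side Q u v); have [y1|y1] := boolP (y \in side Q u v).
- exact: gf1.
- have y2 := side_cover uv yQ y1; have [x2|x2] := boolP (x \in side Q v u); first exact: gf2.
  exact: across xQ yQ (side_cbetween x1 x2) (side_cbetween y2 y1).
- have x2 := side_cover uv xQ x1; have [y2|y2] := boolP (y \in side Q v u); first exact: gf2.
  by rewrite setUC; apply: across yQ xQ (side_cbetween y1 y2) (side_cbetween x2 x1).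
- exact: gf2 (side_cover uv xQ x1) (side_cover uv yQ y1) xy.
Qed.

End Glue.

Lemma weak_frieze_sub S S' (D D' : {set {set 'I_n}}) f :
  S' \subset S -> D' \subset D -> weak_frieze add mul S D f -> weak_frieze add mul S' D' f.
Proof.
move=> /subsetP SS' /subsetP DD' W a b c d aS bS cS dS cr cdD.
by apply: W; rewrite ?SS' ?DD'.
Qed.

Definition pick_in e (A : {set 'I_n}) x0 := odflt x0 [pick x in e | x \in A].

Lemma pick_in_set2 (A : {set 'I_n}) a b x0 : a \in A -> b \notin A -> pick_in [set a; b] A x0 = a.
Proof.
move=> aA bA; rewrite /pick_in; case: pickP => [x /andP[]|/(_ a)]; last by rewrite set21 aA.
by rewrite !inE => /orP[]/eqP-> //; rewrite (negbTE bA).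
Qed.

Definition glue Q u v (f1 f2 : {set 'I_n} -> K) i e :=
  if e \subset side Q u v then f1 e
  else if e \subset side Q v u then f2 e
  else let a := pick_in e (side Q u v) u in let b := pick_in e (side Q v u) v in
       (f1 [set a; u] * f2 [set b; v] + f1 [set a; v] * f2 [set b; u]) * i.

Section GlueProperties.
Variables (Q : {set 'I_n}) (u v : 'I_n) (f1 f2 : {set 'I_n} -> K) (i : K).
Hypothesis uv : u != v.

Lemma glue_left x y : x \in side Q u v -> y \in side Q u v ->
  glue Q u v f1 f2 i [set x; y] = f1 [set x; y].
Proof. by move=> x1 y1; rewrite /glue subUset !sub1set x1 y1. Qed.

Lemma glue_right x y : f1 [set u; v] = f2 [set u; v] ->
  x \in side Q v u -> y \in side Q v u -> x != y -> glue Q u v f1 f2 i [set x; y] = f2 [set x; y].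
Proof.
move=> f12 x2 y2 xy; rewrite /glue !subUset !sub1set x2 y2; case: ifP => // /andP[x1 y1].
have -> // : [set x; y] = [set u; v].
by apply: (side_inter (Q := Q) uv); rewrite ?cards2 ?xy // subUset !sub1set ?x1 ?y1 ?x2 ?y2.
Qed.

Lemma glue_across a b : a \in Q -> b \in Q -> cbetween u a v -> cbetween v b u ->
  glue Q u v f1 f2 i [set a; b] =
  (f1 [set a; u] * f2 [set b; v] + f1 [set a; v] * f2 [set b; u]) * i.
Proof.
move=> aQ bQ uav vbu; have /andP[a1 a2] := cbetween_side aQ uav.
have /andP[b2 b1] := cbetween_side bQ vbu.
rewrite /glue !subUset !sub1set (negbTE a2) (negbTE b1) !andbF.
by rewrite pick_in_set2 // setUC pick_in_set2.
Qed.

End GlueProperties.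

Definition unique_extension (Dsub : {set 'I_n} -> {set {set 'I_n}})
    (fsub : {set 'I_n} -> {set 'I_n} -> K) Q E f :=
  [/\ weak_frieze add mul Q (refinement Dsub Q E) f,
      forall S e, S \in cells_in Q E -> is_diag S e -> f e = fsub S e
    & forall g, weak_frieze add mul Q (refinement Dsub Q E) g ->
        (forall S e, S \in cells_in Q E -> is_diag S e -> g e = fsub S e) ->
        forall e, is_diag Q e -> g e = f e].

Definition frieze_gluing (Dsub : {set 'I_n} -> {set {set 'I_n}}) Q E :=
  forall fsub : {set 'I_n} -> {set 'I_n} -> K,
  (forall S, S \in cells_in Q E -> weak_frieze add mul S (Dsub S) (fsub S)) ->
  (forall S T e, S \in cells_in Q E -> T \in cells_in Q E -> is_diag S e -> is_diag T e ->
     fsub S e = fsub T e) ->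
  exists f, unique_extension Dsub fsub Q E f.

Section GlueStep.
Variables (Dsub : {set 'I_n} -> {set {set 'I_n}}) (Q : {set 'I_n}) (E : {set {set 'I_n}}).
Variables (u v : 'I_n) (fsub : {set 'I_n} -> {set 'I_n} -> K) (f1 f2 : {set 'I_n} -> K) (i : K).
Hypotheses (dE : is_dissection Q E) (uvE : [set u; v] \in E).
Hypotheses (uQ : u \in Q) (vQ : v \in Q) (uv : u != v) (Edis : cells_dissected Dsub Q E).
Hypothesis fsubC : forall S T e, S \in cells_in Q E -> T \in cells_in Q E ->
  is_diag S e -> is_diag T e -> fsub S e = fsub T e.
Hypothesis ext1 : unique_extension Dsub fsub (side Q u v) (side_diags E Q u v) f1.
Hypothesis ext2 : unique_extension Dsub fsub (side Q v u) (side_diags E Q v u) f2.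
Hypothesis f1uvK : f1 [set u; v] * i = one.

Let vu : v != u. Proof. by rewrite eq_sym. Qed.
Let vuE : [set v; u] \in E. Proof. by rewrite setUC. Qed.

Lemma glue_step_edge : f1 [set u; v] = f2 [set u; v].
Proof.
have [_ R1 _] := ext1; have [_ R2 _] := ext2.
have /andP[_ uv_int] := dE.1 _ uvE.
have vu_int : ~~ is_edge Q [set v; u] by rewrite setUC.
have uv_diag S : [set u; v] \subset S -> is_diag S [set u; v] by rewrite /is_diag cards2 uv => ->.
have [S1 S1c uvS1] := edge_in_cell (side_subpolygon uQ vQ uv uv_int)
  (side_diags_dissection dE uQ vQ uv) (is_edge_side uQ vQ uv).
have [S2 S2c] := edge_in_cell (side_subpolygon vQ uQ vu vu_int)
  (side_diags_dissection dE vQ uQ vu) (is_edge_side vQ uQ vu).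
rewrite setUC => uvS2.
rewrite (R1 _ _ S1c (uv_diag _ uvS1)) (R2 _ _ S2c (uv_diag _ uvS2)).
exact (fsubC (cell_of_side dE uvE uQ vQ uv S1c) (cell_of_side dE vuE vQ uQ vu S2c)
  (uv_diag _ uvS1) (uv_diag _ uvS2)).
Qed.

Local Notation f := (glue Q u v f1 f2 i).

Let glue1 x y : x \in side Q u v -> y \in side Q u v -> x != y -> f [set x; y] = f1 [set x; y].
Proof. by move=> x1 y1 _; apply: glue_left. Qed.

Let glue2 x y : x \in side Q v u -> y \in side Q v u -> x != y -> f [set x; y] = f2 [set x; y].
Proof. by move=> x2 y2 xy; apply: glue_right; rewrite ?glue_step_edge. Qed.

Let glue12 a b : a \in Q -> b \in Q -> cbetween u a v -> cbetween v b u ->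
  f [set a; b] = (f1 [set a; u] * f2 [set b; v] + f1 [set a; v] * f2 [set b; u]) * i.
Proof. exact: glue_across. Qed.

Lemma glue_step_frieze : weak_frieze add mul Q (refinement Dsub Q E) f.
Proof.
have [W1 _ _] := ext1; have [W2 _ _] := ext2.
apply: (glue_weak_frieze uv uQ vQ f1uvK glue_step_edge glue1 glue2 glue12 W1 W2).
- by move=> e; apply: refinement_split.
- by move=> e; apply: refinement_side_subset.
- by move=> e; apply: refinement_side_subset.
Qed.

Lemma glue_step_restrict S e : S \in cells_in Q E -> is_diag S e -> f e = fsub S e.
Proof.
have [_ R1 _] := ext1; have [_ R2 _] := ext2.
move=> Scell Sdiag; have /is_diagP[x [y [xS yS xy exy]]] := Sdiag; subst e.
case/(cells_in_split _ dE uvE uQ vQ uv): Scell => Sc; have /cells_inP[Sside _ _ _] := Sc.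
  by rewrite glue1 ?(subsetP Sside) // (R1 _ _ Sc Sdiag).
by rewrite glue2 ?(subsetP Sside) // (R2 _ _ Sc Sdiag).
Qed.

Lemma glue_step_unique g : weak_frieze add mul Q (refinement Dsub Q E) g ->
  (forall S e, S \in cells_in Q E -> is_diag S e -> g e = fsub S e) ->
  forall e, is_diag Q e -> g e = f e.
Proof.
have [_ _ U1] := ext1; have [_ _ U2] := ext2.
move=> Wg Rg e; apply: (glue_unique uv uQ vQ f1uvK glue1 glue2 glue12).
- move=> x y x1 y1 xy; apply: U1 (is_diag_set2 x1 y1 xy).
    exact (weak_frieze_sub (side_sub Q u v) (refinement_side_sub Dsub dE uvE uQ vQ uv) Wg).
  by move=> S e' Sc; apply: Rg; exact (cell_of_side dE uvE uQ vQ uv Sc).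
- move=> x y x2 y2 xy; apply: U2 (is_diag_set2 x2 y2 xy).
    exact (weak_frieze_sub (side_sub Q v u) (refinement_side_sub Dsub dE vuE vQ uQ vu) Wg).
  by move=> S e' Sc; apply: Rg; exact (cell_of_side dE vuE vQ uQ vu Sc).
- by move=> a b aQ bQ cr; apply: Wg => //; apply/refinementP; left.
Qed.

Lemma glue_unique_extension : unique_extension Dsub fsub Q E f.
Proof. by split; [exact: glue_step_frieze|exact: glue_step_restrict|exact: glue_step_unique]. Qed.

End GlueStep.

Lemma dissection_frieze_gluing Dsub Q E : subpolygon Q -> is_dissection Q E ->
  cells_dissected Dsub Q E -> frieze_gluing Dsub Q E.
Proof.
move: Q E; apply: dissection_ind => [Q Qp _ fsub W _|Q E u v _ dE uvE uQ vQ uv IHuv IHvu Edis].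
  have QQ : Q \in cells_in Q set0 by rewrite cells_in0 ?inE.
  exists (fsub Q); rewrite /unique_extension refinement0 //.
  split=> [|S e|g _ Rg e]; [exact: W| |exact: Rg].
  by rewrite cells_in0 // inE => /eqP->.
move=> fsub W C.
have vuE : [set v; u] \in E by rewrite setUC.
have vu : v != u by rewrite eq_sym.
have cell1 := cell_of_side dE uvE uQ vQ uv; have cell2 := cell_of_side dE vuE vQ uQ vu.
have [f1 ext1] := IHuv (cells_dissected_side dE uvE uQ vQ uv Edis) fsub
  (fun S Sc => W S (cell1 S Sc)) (fun S T e Sc Tc => C S T e (cell1 S Sc) (cell1 T Tc)).
have [f2 ext2] := IHvu (cells_dissected_side dE vuE vQ uQ vu Edis) fsub
  (fun S Sc => W S (cell2 S Sc)) (fun S T e Sc Tc => C S T e (cell2 S Sc) (cell2 T Tc)).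
have [i f1uvK] := mulV (f1 [set u; v]).
exists (glue Q u v f1 f2 i).
exact (glue_unique_extension dE uvE uQ vQ uv Edis C ext1 ext2 f1uvK).
Qed.

End Semifield.

Theorem theoremB (K : Type) (add mul : K -> K -> K) (HK : is_semifield add mul)
  (n : nat) (Hn : (3 <= n)%N)
  (E : {set {set 'I_n}}) (HE : is_dissection [set: 'I_n] E)
  (Dsub : {set 'I_n} -> {set {set 'I_n}})
  (HD : forall S, S \in cells E -> is_dissection S (Dsub S)) :
  let D := E :|: \bigcup_(S in cells E) Dsub S in
  (is_dissection [set: 'I_n] D
   /\ (forall S, S \in cells E -> [disjoint E & Dsub S])
   /\ (forall S T, S \in cells E -> T \in cells E -> S != T ->
         [disjoint Dsub S & Dsub T]))
  /\
  (forall fsub : {set 'I_n} -> {set 'I_n} -> K,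
     (forall S, S \in cells E -> weak_frieze add mul S (Dsub S) (fsub S)) ->
     (forall S T d, S \in cells E -> T \in cells E ->
        is_diag S d -> is_diag T d -> fsub S d = fsub T d) ->
     exists f : {set 'I_n} -> K,
       [/\ weak_frieze add mul [set: 'I_n] D f,
           (forall S d, S \in cells E -> is_diag S d -> f d = fsub S d)
         & (forall g : {set 'I_n} -> K,
              weak_frieze add mul [set: 'I_n] D g ->
              (forall S d, S \in cells E -> is_diag S d -> g d = fsub S d) ->
              forall d, is_diag [set: 'I_n] d -> g d = f d)]).
Proof.
move=> D.
have [addA [addC [mulA [mulC [[one [mul1 mulV]] mulDl]]]]] := HK.
have Pp : subpolygon [set: 'I_n] by rewrite /subpolygon cardsT card_ord.
have Edis : cells_dissected Dsub [set: 'I_n] E by move=> S; rewrite cells_inT; apply: HD.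
have DE : D = refinement Dsub [set: 'I_n] E by rewrite /refinement cells_inT.
split; [split; [|split]|].
- by rewrite DE; apply: refinement_dissection.
- move=> S Scell; have := HD S Scell; rewrite -cells_inT in Scell.
  exact: cell_diags_disjoint Scell.
- by rewrite -cells_inT; apply: cells_in_disjoint.
- have := dissection_frieze_gluing addA addC mulA mulC mul1 mulDl mulV Pp HE Edis.
  by rewrite /frieze_gluing /unique_extension cells_inT -DE.
Qed.
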